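(* Let $H=(V,E,C,\ell)$ be an edge-colored graph with $k$ colors, $x$ a feasible solution of the \textsc{MinECC} LP relaxation, $e=\{u,v\}\in E$ an edge with color $c=\ell(e)$ and $x_e=\max\{x_u^c,x_v^c\}$, and let $z_0\le z_1\le\dots\le z_{k-1}$ be the color thresholds of $e$. Then for every integer $t$ with $1\le t\le\frac k2$, $$t\le x_e+z_t+z_{t+1}+\cdots+z_{2t-1}.$$
   Context: The \textsc{MinECC} LP relaxation for an edge-colored hypergraph $H=(V,E,C,\ell)$ with colors $C=[k]$ has constraints $\sum_{i=1}^k x_v^i=k-1$ for all $v\in V$; $x_e\ge x_w^{\ell(e)}$ for all $e\in E$, $w\in e$; $0\le x_w^i\le 1$; $0\le x_e\le 1$. An edge-colored graph is one in which every edge has exactly two nodes. Color thresholds of an edge $e$ with color $c$: for $j\in C\setminus\{c\}$ let $m_j=\min_{w\in e}x_w^j$, and let $m_{(1)}\le m_{(2)}\le\dots\le m_{(k-1)}$ be these $k-1$ values sorted in nondecreasing order. Set $z_0=0$ and $z_i=m_{(i)}$ for $1\le i\le k-1$. Equivalently, $z_i$ is the smallest nonnegative value such that for every $\rho>z_i$ there are at least $i$ distinct colors $j\ne c$ for which some $w\in e$ has $x_w^j<\rho$. *)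

From HB Require Import structures.
From mathcomp Require Import all_boot all_order all_algebra.
Set Implicit Arguments. Unset Strict Implicit. Unset Printing Implicit Defensive.
Import Order.TTheory GRing.Theory Num.Theory.
Local Open Scope ring_scope.

Record ec_hypergraph (k : nat) := ECHypergraph {
  hV : finType;
  hE : finType;
  nodes : hE -> {set hV};
  ell : hE -> 'I_k }.

Definition is_ec_graph k (H : ec_hypergraph k) : Prop :=
  forall e : hE H, #|nodes e| = 2%N.

Definition minecc_lp_feasible (R : realFieldType) k (H : ec_hypergraph k)
    (xv : hV H -> 'I_k -> R) (xe : hE H -> R) : Prop :=
  [/\ forall v : hV H, \sum_(i < k) xv v i = (k.-1)%:R,
      forall (e : hE H) (w : hV H), w \in nodes e -> xv w (ell e) <= xe e,
      forall v i, 0 <= xv v i /\ xv v i <= 1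
    & forall e, 0 <= xe e /\ xe e <= 1].

(* Color thresholds of an edge of a graph with endpoints u, v and color c:
   m_j = min_{w in e} x_w^j = min (x_u^j, x_v^j) for j <> c, sorted
   nondecreasingly as m_(1) <= ... <= m_(k-1); z_0 = 0, z_i = m_(i). *)
Definition sorted_mins (R : realFieldType) (V : Type) k
    (xv : V -> 'I_k -> R) (u v : V) (c : 'I_k) : seq R :=
  sort <=%R [seq Num.min (xv u j) (xv v j) | j <- enum 'I_k & j != c].

Definition color_threshold (R : realFieldType) (V : Type) k
    (xv : V -> 'I_k -> R) (u v : V) (c : 'I_k) (i : nat) : R :=
  if i is i'.+1 then nth 0 (sorted_mins xv u v c) i' else 0.

From HB Require Import structures.
From mathcomp Require Import all_boot all_order all_algebra.
From mathcomp Require Import zify.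
Import Order.TTheory GRing.Theory Num.Theory.
Local Open Scope ring_scope.

(* Let m_0 <= ... <= m_(k-2) be the sorted values min (x_u^j, x_v^j), j <> c, so
   that z_(i+1) = m_i, and call u or v the side of index i according to which
   endpoint attains m_i.  Among the 2t-1 indices i < 2t-1 one endpoint, say u,
   is the side of at least t of them.  Since 1 - m_i decreases with i, the sum of
   1 - m_i over the last t of these indices, i.e. t - (z_t + ... + z_(2t-1)), is
   at most the sum of 1 - x_u^j over the colors on u's side, hence at most
   sum_(j <> c) (1 - x_u^j) = x_u^c <= x_e. *)

Section TailSums.

Variable R : realFieldType.

Lemma sum_tail_le_weighted_sum (D w : nat -> R) (n q : nat) :
  (q <= n)%N ->
  (forall i j, (i <= j < n)%N -> D j <= D i) ->
  (forall i, 0 <= D i) ->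
  (forall i, 0 <= w i <= 1) ->
  q%:R <= \sum_(0 <= i < n) w i ->
  \sum_(n - q <= i < n) D i <= \sum_(0 <= i < n) w i * D i.
Proof.
move=> qn Dmono D0 w01 Wq.
have wD0 i : 0 <= w i * D i by rewrite mulr_ge0 //; case/andP: (w01 i).
case: q qn Wq => [|q'] qn Wq; first by rewrite subn0 big_geq // sumr_ge0.
set q := q'.+1 in qn Wq *; set p := (n - q)%N; set m := D p.
have pn : (p <= n)%N by rewrite leq_subr.
have head : m * \sum_(0 <= i < p) w i <= \sum_(0 <= i < p) w i * D i.
  rewrite mulr_sumr !big_nat ler_sum // => i /andP[_ ip].
  rewrite mulrC ler_wpM2l //; first by case/andP: (w01 i).
  by apply: Dmono; rewrite /p in ip *; lia.
have tail : \sum_(p <= i < n) (1 - w i) * D i <= (q%:R - \sum_(p <= i < n) w i) * m.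
  rewrite -[q in q%:R](subKn qn) -/p -sumr_const_nat -sumrB mulr_suml.
  rewrite !big_nat ler_sum // => i /andP[pi iN].
  apply: ler_wpM2l; last by apply: Dmono; lia.
  by rewrite subr_ge0; case/andP: (w01 i).
rewrite [X in _ <= X](big_cat_nat (n := p)) //=.
have -> : \sum_(p <= i < n) D i
    = \sum_(p <= i < n) (1 - w i) * D i + \sum_(p <= i < n) w i * D i.
  by rewrite -big_split /=; apply: eq_bigr => i _; rewrite mulrBl mul1r subrK.
rewrite lerD2r (le_trans tail) // (le_trans _ head) //.
rewrite mulrC; apply: ler_wpM2l; first exact: D0.
by rewrite lerBlDr -big_cat_nat.
Qed.

Lemma sum_min_tail_le_sum (a b : nat -> R) (n q : nat) :
  (q <= n)%N ->
  (forall i, a i <= 1) ->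
  (forall i j, (i <= j < n)%N -> Num.min (a i) (b i) <= Num.min (a j) (b j)) ->
  (q <= \sum_(0 <= i < n) (a i <= b i)%R)%N ->
  \sum_(n - q <= i < n) (1 - Num.min (a i) (b i)) <= \sum_(0 <= i < n) (1 - a i).
Proof.
move=> qn a1 min_mono qab.
pose w i : R := (a i <= b i)%R%:R.
apply: le_trans (@sum_tail_le_weighted_sum _ w n q qn _ _ _ _) _.
- by move=> i j ij; rewrite lerD2l lerN2 min_mono.
- by move=> i; rewrite subr_ge0 ge_min a1.
- by move=> i; rewrite /w; case: (a i <= b i); rewrite ?lexx ?ler01.
- by rewrite -natr_sum ler_nat.
rewrite !big_nat ler_sum // => i _; rewrite /w.
by case: (leP (a i) (b i)); rewrite ?mul1r ?mul0r ?subr_ge0.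
Qed.

Lemma sum_middle_min_le (a b : nat -> R) (q : nat) (X : R) :
  (forall i, a i <= 1) -> (forall i, b i <= 1) ->
  (forall i j, (i <= j < q.*2.+1)%N ->
     Num.min (a i) (b i) <= Num.min (a j) (b j)) ->
  \sum_(0 <= i < q.*2.+1) (1 - a i) <= X ->
  \sum_(0 <= i < q.*2.+1) (1 - b i) <= X ->
  \sum_(q <= i < q.*2.+1) (1 - Num.min (a i) (b i)) <= X.
Proof.
move=> a1 b1 min_mono aX bX.
have tail_start : (q.*2.+1 - q.+1)%N = q by rewrite -addnn; lia.
have count_split : (\sum_(0 <= i < q.*2.+1) (a i <= b i)%R
                    + \sum_(0 <= i < q.*2.+1) ~~ (a i <= b i)%R)%N = q.*2.+1.
  rewrite -big_split /= (eq_bigr (fun _ => 1%N)); last by move=> i _; case: (a i <= b i).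
  by rewrite sum_nat_const_nat muln1 subn0.
rewrite -{1}tail_start.
have [qa|aq] := leqP q.+1 (\sum_(0 <= i < q.*2.+1) (a i <= b i)%R).
  by apply: le_trans _ aX; apply: sum_min_tail_le_sum => //; rewrite ltnS -addnn leq_addr.
under eq_bigr do rewrite minC.
apply: le_trans _ bX; apply: sum_min_tail_le_sum => //.
- by rewrite ltnS -addnn leq_addr.
- by move=> i j ij; rewrite !(minC (b _)) min_mono.
have qba : (q < \sum_(0 <= i < q.*2.+1) ~~ (a i <= b i)%R)%N.
  by rewrite -addnn in count_split aq *; lia.
apply: (leq_trans qba); apply: leq_sum => i _.
by case: (leP (a i) (b i)) => // /ltW ->.
Qed.

Lemma sum_compl_colors (k : nat) (x : 'I_k -> R) (c : 'I_k) :
  \sum_(i < k) x i = k.-1%:R -> \sum_(j < k | j != c) (1 - x j) = x c.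
Proof.
rewrite (bigD1 c) //= sumrB sumr_const cardC1 card_ord => sum_x.
by rewrite -sum_x addrK.
Qed.

End TailSums.

Section SortedColors.

Context {R : realFieldType} {V : Type} {k : nat}.
Variables (xv : V -> 'I_k -> R) (u v : V) (c : 'I_k).

Definition color_min (j : 'I_k) : R := Num.min (xv u j) (xv v j).

Definition sorted_colors : seq 'I_k :=
  sort (fun i j => color_min i <= color_min j) [seq j <- enum 'I_k | j != c].

Lemma sorted_minsE : sorted_mins xv u v c = map color_min sorted_colors.
Proof. by rewrite /sorted_colors (map_sort (leT := <=%R)). Qed.

Lemma size_sorted_colors : size sorted_colors = k.-1.
Proof.
by rewrite size_sort size_filter -sum1_count big_enum_cond sum1_card cardC1 card_ord.
Qed.

Lemma color_thresholdS (i : nat) : (i < k.-1)%N ->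
  color_threshold xv u v c i.+1 = color_min (nth c sorted_colors i).
Proof. by move=> ik; rewrite /= sorted_minsE (nth_map c) // size_sorted_colors. Qed.

Lemma color_min_sorted_mono (i j : nat) : (i <= j < k.-1)%N ->
  color_min (nth c sorted_colors i) <= color_min (nth c sorted_colors j).
Proof.
rewrite -size_sorted_colors => /andP[ij jL].
have iL : (i < size sorted_colors)%N := leq_ltn_trans ij jL.
have min_trans : transitive (fun i j : 'I_k => color_min i <= color_min j).
  by move=> ? ? ? /le_trans; apply.
apply: (sorted_leq_nth min_trans (fun i => lexx (color_min i))) ij.
- exact: sort_sorted (fun i j => le_total (color_min i) (color_min j)) _.
- by rewrite inE.
- by rewrite inE.
Qed.

Lemma sum_sorted_colors_prefix_le (y : V) (n : nat) :
  (n <= k.-1)%N -> (forall j, xv y j <= 1) -> \sum_(i < k) xv y i = k.-1%:R ->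
  \sum_(0 <= i < n) (1 - xv y (nth c sorted_colors i)) <= xv y c.
Proof.
move=> nk y_le1 sum_y.
have <- : \sum_(j <- sorted_colors) (1 - xv y j) = xv y c.
  rewrite (perm_big _ (permEl (perm_sort _ _))) big_filter big_enum_cond /=.
  exact: sum_compl_colors.
rewrite (big_nth c) size_sorted_colors [X in _ <= X](big_cat_nat (n := n)) //= lerDl.
by rewrite sumr_ge0 // => i _; rewrite subr_ge0.
Qed.

End SortedColors.

Theorem lemma3 (R : realFieldType) (k : nat) (H : ec_hypergraph k)
    (xv : hV H -> 'I_k -> R) (xe : hE H -> R)
    (e : hE H) (u v : hV H) (t : nat) :
  is_ec_graph H ->
  minecc_lp_feasible xv xe ->
  nodes e = [set u; v] ->
  xe e = Num.max (xv u (ell e)) (xv v (ell e)) ->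
  (1 <= t)%N -> (t.*2 <= k)%N ->
  t%:R <= xe e + \sum_(t <= i < t.*2) color_threshold xv u v (ell e) i.
Proof.
move=> _ [sum_colors edge_le node01 _] nodes_e _.
case: t => [//|q] _; rewrite doubleS => size_k.
set c := ell e; set L := sorted_colors xv u v c.
have le1 y j : xv y j <= 1 by case: (node01 y j).
have xu_le : xv u c <= xe e by apply: edge_le; rewrite nodes_e !inE eqxx.
have xv_le : xv v c <= xe e by apply: edge_le; rewrite nodes_e !inE eqxx orbT.
have thresholds : \sum_(q <= i < q.*2.+1) color_threshold xv u v c i.+1
    = \sum_(q <= i < q.*2.+1) color_min xv u v (nth c L i).
  by rewrite !big_nat; apply: eq_bigr => i /andP[_ ?]; rewrite color_thresholdS //; lia.
have ones : q.+1%:R = \sum_(q <= i < q.*2.+1) (1 : R).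
  by rewrite sumr_const_nat; congr (_%:R); rewrite -addnn; lia.
rewrite big_add1 /= thresholds -lerBlDr ones -sumrB.
apply: (@sum_middle_min_le R (fun i => xv u (nth c L i)) (fun i => xv v (nth c L i))).
- by move=> i; apply: le1.
- by move=> i; apply: le1.
- by move=> i j ij; apply: color_min_sorted_mono; lia.
- by apply: le_trans xu_le; apply: sum_sorted_colors_prefix_le => //; lia.
- by apply: le_trans xv_le; apply: sum_sorted_colors_prefix_le => //; lia.
Qed.
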